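(* Let $n\ge 4$ be an integer and let $QD_{2^n}=\langle a,b : a^{2^{n-1}}=b^2=1,\ bab^{-1}=a^{2^{n-2}-1}\rangle$ be the quasidihedral group of order $2^n$. Let $\Gamma_{QD_{2^n}}$ be its non-commuting graph. Let $t_1,t_2$ be the two roots of the equation $(2^{n-1}-2)x^2-(2^n-10)x-2^{n-1}=0$. Then the spectrum of the distance signless Laplacian matrix $D^Q(\Gamma_{QD_{2^n}})$ (eigenvalues counted with multiplicity, multiplicities being added if two of the listed values coincide) consists of: (a) $2^n-4$ with multiplicity $2^{n-2}$; (b) $2^n-2$ with multiplicity $2^{n-2}-1$; (c) $2^n+2^{n-1}-8$ with multiplicity $2^{n-1}-3$; (d) $t_k(2^{n-1}-2)+3\cdot 2^{n-1}-2$ with multiplicity $1$, for each $k=1,2$.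
   Context: For a finite non-abelian group $G$ with centre $Z(G)$, the non-commuting graph $\Gamma_G$ is the simple undirected graph with vertex set $G\setminus Z(G)$, in which two distinct vertices $u,v$ are adjacent if and only if $uv\ne vu$. For a connected graph $H$, $d_{uv}$ denotes the length of a shortest path between $u$ and $v$; the distance matrix $D(H)$ has $(u,v)$-entry $d_{uv}$. The transmission of a vertex $v$ is $\sum_{u} d_{uv}$, and $Tr(H)$ is the diagonal matrix of vertex transmissions. The distance signless Laplacian matrix is $D^Q(H)=Tr(H)+D(H)$. *)

From HB Require Import structures.
From mathcomp Require Import all_boot all_order all_algebra all_fingroup all_solvable center extremal.
Set Implicit Arguments. Unset Strict Implicit. Unset Printing Implicit Defensive.
Import GRing.Theory.

Section NonCommutingGraph.
Variables (gT : finGroupType) (G : {group gT}).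

Definition ncV : {set gT} := (G :\: 'Z(G))%g.

(* adjacency: distinct vertices that do not commute (uv <> vu forces u <> v) *)
Definition nc_adj (x y : gT) : bool :=
  [&& x \in ncV, y \in ncV & (x * y != y * x)%g].

Fixpoint nc_reach (k : nat) (x y : gT) : bool :=
  if k is k'.+1 then nc_reach k' x y || [exists z, nc_reach k' x z && nc_adj z y]
  else x == y.

(* graph distance: least k such that y is reachable from x in at most k steps
   (searched in 0 .. #|gT|-1, which suffices since walks can be shortened
   to paths; the graph is connected in the case considered). *)
Definition nc_dist (x y : gT) : nat :=
  find (fun k => nc_reach k x y) (iota 0 #|gT|).

Definition nc_vert (i : 'I_#|ncV|) : gT := enum_val i.

Variable R : nzRingType.
Local Open Scope ring_scope.

Definition nc_D : 'M[R]_#|ncV| :=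
  \matrix_(i, j) (nc_dist (nc_vert i) (nc_vert j))%:R.

Definition nc_transmission (i : 'I_#|ncV|) : R := \sum_j nc_D i j.

Definition nc_DQ : 'M[R]_#|ncV| :=
  diag_mx (\row_i nc_transmission i) + nc_D.

End NonCommutingGraph.

From HB Require Import structures.
From mathcomp Require Import all_boot all_order all_algebra all_fingroup all_solvable.
From mathcomp Require Import center extremal ring zify.
Import GRing.Theory Num.Theory.
Set Implicit Arguments. Unset Strict Implicit. Unset Printing Implicit Defensive.
Local Open Scope ring_scope.

(** Let A = <x> be the cyclic subgroup of index 2 of G = SD_(2^n) and c its
    central involution, so that Z(G) = {1, c} is contained in A.  Any two vertices
    of the non-commuting graph have a common neighbour, so distinct vertices are at
    distance 1 or 2 according as they do not or do commute.  Elements of A \ Z(G)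
    commute with each other and with nothing outside A, and two distinct elements
    t, t' outside A commute iff t' = c t.  Hence D^Q = K + U Y, where K is a
    diagonal matrix plus the perfect matching t |-> c t of G \ A, and the columns
    of U are the indicator vectors of A \ Z(G) and G \ A, which are eigenvectors
    of K.  The identity char(K + U Y) char(B) = char(K) char(B + Y U), valid when
    K U = U B, reduces the spectrum to that of K, obtained from
    det (D - P) det (D + P) = det (D^2 - P^2) and a sign conjugation taking D - P
    to D + P, and to that of a 2 x 2 matrix whose characteristic polynomial, for
    #|A| = 2^(n-1), has the affine images of t1 and t2 as roots. *)

Lemma det_mx22 (R : comNzRingType) (M : 'M[R]_2) :
  \det M = M 0 0 * M 1 1 - M 0 1 * M 1 0.
Proof.
rewrite (expand_det_row _ 0) !big_ord_recl big_ord0 addr0 /cofactor !det_mx11.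
rewrite !mxE /= expr0 expr1 mul1r mulN1r mulrN.
by congr (M _ _ * M _ _ - M _ _ * M _ _); apply: val_inj.
Qed.

Lemma char_poly_mx22 (R : comNzRingType) (M : 'M[R]_2) :
  char_poly M = ('X - (M 0 0)%:P) * ('X - (M 1 1)%:P) - (M 0 1 * M 1 0)%:P.
Proof. by rewrite /char_poly det_mx22 !mxE /= polyCM; ring. Qed.

Lemma det_sub_rank_update (R : comNzRingType) m r (P : 'M[R]_m) (Q : 'M[R]_r)
    (U : 'M[R]_(m, r)) (Y : 'M[R]_(r, m)) :
  P *m U = U *m Q -> \det (P - U *m Y) * \det Q = \det P * \det (Q - Y *m U).
Proof.
move=> PU.
have factorL : block_mx 1%:M U 0 1%:M *m block_mx (P - U *m Y) 0 Y 1%:M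
               = block_mx P U Y 1%:M.
  by rewrite mulmx_block !mul1mx !mul0mx mulmx1 !add0r subrK.
have factorR : block_mx P U Y 1%:M *m block_mx 1%:M 0 0 Q *m block_mx 1%:M (- U) 0 1%:M
               = block_mx P 0 Y (Q - Y *m U).
  rewrite !mulmx_block !mulmx1 !mul1mx !mulmx0 ?mul0mx ?addr0 ?add0r.
  by rewrite !mulmxN PU addNr addrC.
have := congr1 determinant factorR.
rewrite -factorL !det_mulmx det_ublock det_lblock !det_ublock det_lblock !det1.
by rewrite !mulr1 !mul1r => ->.
Qed.

Lemma char_poly_add_mul (R : comNzRingType) m r (A : 'M[R]_m) (B : 'M[R]_r)
    (U : 'M[R]_(m, r)) (Y : 'M[R]_(r, m)) :
  A *m U = U *m B ->
  char_poly (A + U *m Y) * char_poly B = char_poly A * char_poly (B + Y *m U).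
Proof.
move=> AU.
have char_poly_mx_addM n1 n2 (M : 'M[R]_n1) (N : 'M[R]_(n1, n2)) L :
    char_poly_mx (M + N *m L) = char_poly_mx M - map_mx polyC N *m map_mx polyC L.
  by rewrite /char_poly_mx map_mxD map_mxM opprD addrA.
rewrite /char_poly !char_poly_mx_addM det_sub_rank_update //.
by rewrite /char_poly_mx mulmxBl mulmxBr mul_scalar_mx mul_mx_scalar -!map_mxM AU.
Qed.

Lemma det_sub_conj_sign (R : comNzRingType) m (E D P : 'M[R]_m) :
  E *m E = 1%:M -> E *m D *m E = D -> E *m P *m E = - P ->
  \det (D - P) = \det (D + P).
Proof.
move=> EE ED EP.
have detE2 : \det E * \det E = 1 by rewrite -det_mulmx EE det1.
have -> : D + P = E *m (D - P) *m E by rewrite mulmxBr mulmxBl ED EP opprK.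
by rewrite !det_mulmx mulrC mulrA detE2 mul1r.
Qed.

Lemma det_sub_mul_add (R : comNzRingType) m (D P : 'M[R]_m) :
  D *m P = P *m D -> \det (D - P) * \det (D + P) = \det (D *m D - P *m P).
Proof.
by move=> DP; rewrite -det_mulmx mulmxBl !mulmxDr DP opprD addrA addrK.
Qed.

Lemma monic_sqr_inj (R : numDomainType) (p q : {poly R}) :
  p \is monic -> q \is monic -> p ^+ 2 = q ^+ 2 -> p = q.
Proof.
move=> mp mq /eqP; rewrite eqf_sqr => /orP[/eqP // | /eqP pNq].
move: mp; rewrite pNq monicE lead_coefN (monicP mq) eq_sym -addr_eq0.
by rewrite -(natrD _ 1 1) pnatr_eq0.
Qed.

Lemma affine_roots_quadratic (R : comNzRingType) (a b c v t1 t2 : R) :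
  a *: 'X^2 - b *: 'X - c%:P = a *: (('X - t1%:P) * ('X - t2%:P)) ->
  ('X - (t1 * a + v)%:P) * ('X - (t2 * a + v)%:P)
    = ('X - v%:P) ^+ 2 - b *: ('X - v%:P) - (a * c)%:P.
Proof.
move=> fact.
have := congr1 (horner^~ 0) fact; have := congr1 (horner^~ 1) fact.
rewrite !(hornerE, hornerZ) /= => at1 at0.
have hc : c = - (a * (t1 * t2)) by rewrite -(mulrNN t1 t2) mulrA -at0; ring.
have hb : b = a * (t1 + t2).
  by transitivity (a * 1 * 1 - c - (a * 1 * 1 - b - c)); [ring | rewrite at1 hc; ring].
by rewrite hb hc -!mul_polyC; ring.
Qed.

Lemma sum_if_set (R : nzRingType) (T : finType) (A : {set T}) (a b : R) :
  \sum_j (if j \in A then a else b) = a *+ #|A| + b *+ #|~: A|.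
Proof.
by rewrite big_if -!sumr_const; congr (_ + _); apply: eq_bigl => j; rewrite ?inE.
Qed.

Lemma prod_if_set (R : comNzRingType) (T : finType) (A : {set T}) (a b : R) :
  \prod_j (if j \in A then a else b) = a ^+ #|A| * b ^+ #|~: A|.
Proof.
by rewrite big_if -!prodr_const; congr (_ * _); apply: eq_bigl => j; rewrite ?inE.
Qed.

Lemma sum_pred1_mul (R : nzRingType) (T : finType) (c : T) (F : T -> R) :
  \sum_j (j == c)%:R * F j = F c.
Proof.
rewrite (bigD1 c) //= eqxx mul1r big1 ?addr0 // => j /negbTE ->.
by rewrite mul0r.
Qed.

(** * A distance matrix with a pairing *)

Definition pairing (T : finType) (B : {set T}) (p : T -> T) :=
  {in B, forall i, [/\ p i \in B, p i != i & p (p i) = i]}.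

(* S stands for the vertices in A \ Z(G), and p for t |-> c t on G \ A. *)
Section PairedDistance.
Variables (m : nat) (S : {set 'I_m}) (p : 'I_m -> 'I_m).

Definition paired_dist (i j : 'I_m) : nat :=
  if i == j then 0 else if i \in S then (j \in S).+1 else (j == p i).+1.

Definition paired_D (R : nzRingType) : 'M[R]_m :=
  \matrix_(i, j) (paired_dist i j)%:R.

Definition paired_DQ (R : nzRingType) : 'M[R]_m :=
  diag_mx (\row_i \sum_j paired_D R i j) + paired_D R.

Definition pair_mx (R : nzRingType) : 'M[R]_m :=
  \matrix_(i, j) ((i \notin S) && (j == p i))%:R.

Definition base_mx (R : nzRingType) (a b : R) : 'M[R]_m :=
  diag_mx (\row_i if i \in S then a else b) + pair_mx R.

Definition ind_mx (R : nzRingType) : 'M[R]_(m, 2) :=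
  \matrix_(i, l) (if l == 0 then i \in S else i \notin S)%:R.

Definition wt_mx (R : nzRingType) : 'M[R]_(2, m) :=
  \matrix_(l, j) (if l == 0 then (j \in S).+1 else 1)%:R.

Hypothesis pairingS : pairing (~: S) p.
Variable k : nat.
Hypothesis card_compl : #|~: S| = (k + k)%N.

Lemma pairingP i : i \notin S -> [/\ p i \notin S, p i != i & p (p i) = i].
Proof. by rewrite -in_setC => /pairingS[]; rewrite in_setC. Qed.

Lemma pair_mxM (R : nzRingType) n (M : 'M[R]_(m, n)) i j :
  (pair_mx R *m M) i j = (i \notin S)%:R * M (p i) j.
Proof.
rewrite mxE -(sum_pred1_mul (p i) (fun l => (i \notin S)%:R * M l j)).
apply: eq_bigr => l _; rewrite mxE.
by case: (i \notin S); case: (l == p i); rewrite ?mul1r ?mul0r.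
Qed.

Lemma paired_D_row_sum (R : comNzRingType) i :
  \sum_j paired_D R i j =
    if i \in S then (#|S|%:R + k%:R) * 2 - 2 else #|S|%:R + k%:R * 2.
Proof.
case: ifPn => iS.
  rewrite (eq_bigr (fun j => (if j \in S then 2 else 1) - (j == i)%:R * 2)); last first.
    move=> j _; rewrite mxE /paired_dist iS eq_sym.
    by case: eqP => [->|_]; rewrite ?iS ?mul1r ?subrr ?mul0r ?subr0 //; case: (j \in S).
  by rewrite sumrB sum_if_set sum_pred1_mul card_compl; ring.
have [pS pi_neq ppi] := pairingP iS.
rewrite (eq_bigr (fun j => 1 - (j == i)%:R * 1 + (j == p i)%:R * 1)); last first.
  move=> j _; rewrite mxE /paired_dist (negbTE iS) eq_sym.
  case: eqP => [->|_]; first by rewrite eq_sym (negbTE pi_neq) /=; ring.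
  by case: (j == p i) => /=; ring.
rewrite big_split sumrB /= !sum_pred1_mul sumr_const subrK.
by rewrite -(cardsC S) card_compl !natrD; ring.
Qed.

Lemma paired_DQ_decomp (R : comNzRingType) :
  paired_DQ R = base_mx ((#|S|%:R + k%:R) * 2 - 4) (#|S|%:R + k%:R * 2 - 1)
                + ind_mx R *m wt_mx R.
Proof.
apply/matrixP => i j; rewrite !mxE paired_D_row_sum !big_ord_recl big_ord0 !mxE /=.
rewrite /paired_dist; case: (eqVneq i j) => [<-|ij] /=; last first.
  by case: (i \in S); case: (j \in S) => /=; ring.
case: (boolP (i \in S)) => iS /=; first ring.
by have [_ /negbTE pi_neq _] := pairingP iS; rewrite eq_sym pi_neq /=; ring.
Qed.

Lemma base_mx_ind_mx (R : comNzRingType) (a b : R) :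
  base_mx a b *m ind_mx R = ind_mx R *m diag_mx (\row_l if l == 0 then a else b + 1).
Proof.
apply/matrixP => i l; rewrite mulmxDl mxE pair_mxM mul_diag_mx mul_mx_diag !mxE.
case: (boolP (i \in S)) => iS /=; first by case: (l == 0) => /=; ring.
by have [/negbTE pS _ _] := pairingP iS; rewrite pS; case: (l == 0) => /=; ring.
Qed.


(* Each pair {i, p i} carries exactly one -1, so conjugation negates pair_mx. *)
Definition pair_sign_mx (R : nzRingType) : 'M[R]_m :=
  diag_mx (\row_i if (i \notin S) && (p i < i)%N then -1 else 1).

Lemma pair_sign_mx_sqr (R : nzRingType) : pair_sign_mx R *m pair_sign_mx R = 1%:M.
Proof.
apply/matrixP => i j; rewrite mul_diag_mx !mxE mulrnAr.
by case: ifP => _; rewrite ?mulrNN mulr1.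
Qed.

Lemma pair_sign_mx_conj_diag (R : comNzRingType) (d : 'rV[R]_m) :
  pair_sign_mx R *m diag_mx d *m pair_sign_mx R = diag_mx d.
Proof.
apply/matrixP => i j; rewrite mul_mx_diag mul_diag_mx !mxE.
case: eqVneq => [->|_]; rewrite ?mulr0n ?(mulr0, mul0r) // mulr1n.
by case: ifP => _; rewrite ?mulN1r ?mulrN1 ?opprK ?mul1r ?mulr1.
Qed.

Lemma pair_sign_mx_conj_pair (R : nzRingType) :
  pair_sign_mx R *m pair_mx R *m pair_sign_mx R = - pair_mx R.
Proof.
apply/matrixP => i j; rewrite mul_mx_diag mul_diag_mx !mxE.
case: (boolP (i \in S)) => iS /=; first by rewrite !(mulr0, mul0r) oppr0.
case: eqVneq => [->|_] /=; last by rewrite !(mulr0, mul0r) oppr0.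
have [pS pi_neq ppi] := pairingP iS; rewrite pS ppi mulr1 /=.
case: (ltngtP i (p i)) => [_|_|/val_inj ipi]; rewrite ?mulN1r ?mul1r //.
by move: pi_neq; rewrite -ipi eqxx.
Qed.

Lemma diag_pair_mxC (R : nzRingType) (x y : R) :
  let D := diag_mx (\row_i if i \in S then x else y) in
  D *m pair_mx R = pair_mx R *m D.
Proof.
apply/matrixP => i j; rewrite mul_mx_diag mul_diag_mx !mxE.
case: (boolP (i \in S)) => iS /=; first by rewrite !(mulr0, mul0r).
have [/negbTE pS _ _] := pairingP iS.
by case: eqVneq => [->|_]; rewrite ?(mulr0, mul0r) // mulr1 mul1r pS.
Qed.

Lemma pair_mx_sqr (R : nzRingType) :
  pair_mx R *m pair_mx R = diag_mx (\row_i (i \notin S)%:R).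
Proof.
apply/matrixP => i j; rewrite pair_mxM !mxE.
case: (boolP (i \in S)) => iS /=; first by rewrite mul0r mul0rn.
by have [/negbTE pS _ ppi] := pairingP iS; rewrite pS ppi eq_sym mul1r.
Qed.

Lemma char_poly_base_mx (R : numDomainType) (a b : R) :
  char_poly (base_mx a b) =
    ('X - a%:P) ^+ #|S| * (('X - (b + 1)%:P) * ('X - (b - 1)%:P)) ^+ k.
Proof.
pose D := diag_mx (\row_i if i \in S then 'X - a%:P else 'X - b%:P).
pose P := pair_mx {poly R}.
have cpE : char_poly_mx (base_mx a b) = D - P.
  apply/matrixP => i j; rewrite !mxE polyCD polyCMn polyC_natr.
  by case: (i \in S); case: (i == j); rewrite /= ?mulr1n ?mulr0n; ring.
have DDPP : D *m D - P *m P = diag_mx (\row_i if i \in S then ('X - a%:P) ^+ 2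
                                     else ('X - (b + 1)%:P) * ('X - (b - 1)%:P)).
  apply/matrixP => i j; rewrite pair_mx_sqr mul_diag_mx !mxE.
  case: (i \in S); case: (i == j); rewrite /= ?mulr1n ?mulr0n ?mulr0 ?subr0 ?expr2 //.
  by rewrite polyCD polyCB polyC1; ring.
apply: monic_sqr_inj; first exact: char_poly_monic.
  by rewrite monicMl ?monic_exp ?monicXsubC // monicMl ?monicXsubC.
have signDP := det_sub_conj_sign (pair_sign_mx_sqr _) (pair_sign_mx_conj_diag _)
                                 (pair_sign_mx_conj_pair _).
rewrite expr2 /char_poly cpE {2}signDP det_sub_mul_add ?diag_pair_mxC // DDPP det_diag.
under eq_bigr do rewrite mxE.
by rewrite prod_if_set card_compl exprMn exprD; ring.
Qed.

Lemma wt_mx_ind_mx (R : comNzRingType) :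
  wt_mx R *m ind_mx R =
    \matrix_(l, l') if l' == 0 then #|S|%:R * (l == 0).+1%:R else k%:R * 2.
Proof.
apply/matrixP => l l'; rewrite !mxE.
under eq_bigr => j _ do rewrite !mxE.
rewrite (eq_bigr (fun j => if j \in S then ((l == 0).+1 * (l' == 0))%:R
                          else (l' != 0)%:R)); last first.
  by move=> j _; case: (j \in S); case: (l == 0); case: (l' == 0); rewrite /= ?mulr1 ?mulr0.
rewrite sum_if_set card_compl.
by case: (l == 0); case: (l' == 0); rewrite /=; ring.
Qed.

Lemma char_poly_paired_DQ (R : numDomainType) :
  (0 < #|S|)%N -> (0 < k)%N ->
  char_poly (paired_DQ R) =
      ('X - (#|S|%:R + k%:R * 2 - 2)%:P) ^+ k
    * ('X - (#|S|%:R + k%:R * 2)%:P) ^+ k.-1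
    * ('X - ((#|S|%:R + k%:R) * 2 - 4)%:P) ^+ #|S|.-1
    * (('X - (#|S|%:R * 4 + k%:R * 2 - 4)%:P) * ('X - (#|S|%:R + k%:R * 4)%:P)
       - (#|S|%:R * k%:R * 2)%:P).
Proof.
move=> S_gt0 k_gt0.
set a : R := (_ + _) * 2 - 4; set b : R := #|S|%:R + k%:R * 2 - 1.
have := char_poly_add_mul (wt_mx R) (base_mx_ind_mx a b).
rewrite -paired_DQ_decomp char_poly_base_mx wt_mx_ind_mx !char_poly_mx22 !mxE /=.
rewrite !(mulr1n, mulr0n, mul0r, add0r, mulr1, subr0) => cpE.
have nz : ('X - a%:P) * ('X - (b + 1)%:P) != 0.
  by rewrite monic_neq0 // monicMl ?monicXsubC.
apply: (mulIf nz); rewrite cpE.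
have -> : b + 1 = #|S|%:R + k%:R * 2 by rewrite /b; ring.
have -> : b - 1 = #|S|%:R + k%:R * 2 - 2 by rewrite /b; ring.
have -> : a + #|S|%:R * 2 = #|S|%:R * 4 + k%:R * 2 - 4 by rewrite /a; ring.
have -> : #|S|%:R + k%:R * 2 + k%:R * 2 = #|S|%:R + k%:R * 4 :> R by ring.
have powS (c : R) : ('X - c%:P) ^+ #|S| = ('X - c%:P) * ('X - c%:P) ^+ #|S|.-1.
  by rewrite -exprS prednK.
have powk (c : R) : ('X - c%:P) ^+ k = ('X - c%:P) * ('X - c%:P) ^+ k.-1.
  by rewrite -exprS prednK.
rewrite powS exprMn (powk (#|S|%:R + k%:R * 2)).
move: (_ ^+ #|S|.-1) (_ ^+ k.-1) (_ ^+ k) => P1 P2 P3.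
ring.
Qed.
End PairedDistance.

(** * The non-commuting graph has diameter two *)

Section NonCommutingGraphDiameter.
Variables (gT : finGroupType) (G : {group gT}).
Local Open Scope group_scope.

Lemma ncV_not_cent1 u : u \in ncV G -> exists2 g, g \in G & g \notin 'C[u].
Proof.
case/setDP => Gu uZ; apply/subsetPn; rewrite sub_cent1.
by apply: contra uZ => uCG; rewrite inE Gu.
Qed.

Lemma nc_common_neighbour u v :
  u \in ncV G -> v \in ncV G -> exists w, nc_adj G u w && nc_adj G w v.
Proof.
move=> Vu Vv.
suff [w Gw /andP[wCu wCv]] : exists2 w, w \in G & (w \notin 'C[u]) && (w \notin 'C[v]).
  have Vw : w \in ncV G.
    rewrite inE Gw andbT; apply: contra wCu => /centerP[_ cwG].
    by apply/cent1P/cwG; case/setDP: Vu.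
  exists w; rewrite /nc_adj Vu Vv Vw /=.
  by apply/andP; split; [apply: contra wCu | apply: contra wCv] => /eqP c; apply/cent1P.
(* A group is not the union of the two proper subgroups 'C[u] and 'C[v]. *)
have [g Gg gCu] := ncV_not_cent1 Vu; have [h Gh hCv] := ncV_not_cent1 Vv.
case gCv: (g \in 'C[v]); last by exists g; rewrite ?gCu ?gCv.
case hCu: (h \in 'C[u]); last by exists h; rewrite ?hCu ?hCv.
exists (g * h); first exact: groupM.
by rewrite (groupMr _ hCu) (groupMl _ gCv) gCu hCv.
Qed.

(* nc_dist only searches path lengths below #|gT|. *)
Lemma card_gt2_of_ncV u : u \in ncV G -> (2 < #|gT|)%N.
Proof.
move=> Vu; have [g Gg gCu] := ncV_not_cent1 Vu.
have u_neq1 : u != 1 by apply: contraTneq Vu => ->; rewrite !inE !group1.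
have g_neq1 : g != 1 by apply: contraNneq gCu => ->; exact: group1.
have g_neq_u : g != u by apply: contraNneq gCu => ->; exact: cent1id.
have : uniq [:: 1; u; g] by rewrite /= !inE !negb_or !(eq_sym 1) u_neq1 g_neq1 eq_sym g_neq_u.
by move/card_uniqP => card3; rewrite -[3%N]/(size [:: 1; u; g]) -card3 max_card.
Qed.

Lemma nc_distE u v : u \in ncV G -> v \in ncV G ->
  nc_dist G u v = if u == v then 0%N else if u * v == v * u then 2%N else 1%N.
Proof.
move=> Vu Vv; rewrite /nc_dist; case: #|gT| (card_gt2_of_ncV Vu) => [|[|[|n]]] // _.
have step1 z x : [exists y, (z == y) && nc_adj G y x] = nc_adj G z x.
  by apply/existsP/idP => [[y /andP[/eqP-> //]] | zx]; exists z; rewrite eqxx.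
rewrite /= step1; case: eqVneq => [//|uv /=].
have -> : nc_adj G u v = (u * v != v * u) by rewrite /nc_adj Vu Vv.
case: eqP => //= _; have [w /andP[uw wv]] := nc_common_neighbour Vu Vv.
suff -> : [exists z, ((u == z) || [exists y, (u == y) && nc_adj G y z]) && nc_adj G z v] by [].
by apply/existsP; exists w; rewrite step1 uw orbT.
Qed.
End NonCommutingGraphDiameter.

(** * Groups with an abelian subgroup of index two *)

Lemma card_enum_val_preim (T : finType) (V B : {set T}) :
  #|[set i : 'I_#|V| | enum_val i \in B]| = #|V :&: B|.
Proof.
rewrite -(card_imset _ enum_val_inj); apply: eq_card => v.
rewrite inE; apply/imsetP/andP => [[i]|[Vv Bv]].
  by rewrite inE => Bi ->; split => //; exact: enum_valP.
by exists (enum_rank_in Vv v); rewrite ?inE enum_rankK_in.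
Qed.

Section AbelianIndexTwo.
Local Open Scope group_scope.
Variables (gT : finGroupType) (G A : {group gT}).
Hypotheses (sAG : A \subset G) (cAA : abelian A) (iAG : #|G : A| = 2%N).

Lemma index2_mulV t1 t2 : t1 \in G :\: A -> t2 \in G :\: A -> t2 * t1^-1 \in A.
Proof. by move=> t1GA; rewrite -(rcoset_index2 sAG iAG t1GA) mem_rcoset. Qed.

Lemma index2_not_commute z t : z \in A :\: 'Z(G) -> t \in G :\: A -> z * t != t * z.
Proof.
case/setDP=> Az zZ tGA; apply: contra zZ => /eqP zt.
apply/centerP; split=> [|g Gg]; first exact: subsetP sAG z Az.
have zA a : a \in A -> commute z a by move=> Aa; exact: (centsP cAA).
case Ag: (g \in A); first exact: zA.
rewrite -(mulgKV t g); apply: commuteM => //; apply/zA/index2_mulV => //.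
by rewrite inE Ag.
Qed.

Lemma index2_commute_out t1 t2 : t1 \in G :\: A -> t2 \in G :\: A ->
  (t1 * t2 == t2 * t1) = (t2 * t1^-1 \in 'Z(G)).
Proof.
move=> t1GA t2GA; have Aw := index2_mulV t1GA t2GA.
set w := t2 * t1^-1 in Aw *; have -> : t2 = w * t1 by rewrite mulgKV.
rewrite mulgA (inj_eq (mulIg t1)); case: (boolP (w \in 'Z(G))) => wZ.
  by case/setDP: t1GA => Gt1 _; case/centerP: wZ => _ /(_ t1 Gt1) ->; rewrite eqxx.
by apply/negbTE; rewrite eq_sym index2_not_commute // inE wZ.
Qed.

Variable c : gT.
Hypotheses (ZG : 'Z(G) = [set 1; c]) (c_neq1 : c != 1) (Ac : c \in A).

Lemma index2_center_sub : 'Z(G) \subset A.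
Proof. by rewrite ZG subUset !sub1set group1 Ac. Qed.

Lemma center2_mem : c \in 'Z(G).
Proof. by rewrite ZG !inE eqxx orbT. Qed.

Lemma center2_mulcc : c * c = 1.
Proof.
have : c * c \in 'Z(G) by rewrite groupM ?center2_mem.
rewrite ZG !inE => /orP[/eqP // | /eqP cc].
by case/eqP: c_neq1; apply: (mulIg c); rewrite cc mul1g.
Qed.

Definition ncA : {set 'I_#|ncV G|} := [set i | nc_vert i \in A].

Definition nc_mulc (i : 'I_#|ncV G|) : 'I_#|ncV G| :=
  enum_rank_in (enum_valP i) (c * nc_vert i).

Lemma nc_vert_mulc i : nc_vert (nc_mulc i) = c * nc_vert i.
Proof.
have Gc : c \in G := subsetP (center_sub G) c center2_mem.
rewrite /nc_vert /nc_mulc enum_rankK_in //.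
by have := enum_valP i; rewrite !in_setD (groupMl _ center2_mem) (groupMl _ Gc).
Qed.

Lemma pairing_nc_mulc : pairing (~: ncA) nc_mulc.
Proof.
move=> i; rewrite !inE nc_vert_mulc => iA; split.
- by rewrite groupMl.
- apply: contra c_neq1 => /eqP/(congr1 (@nc_vert _ G)).
  by rewrite nc_vert_mulc -{2}(mul1g (nc_vert i)) => /mulIg ->.
- by apply: enum_val_inj; rewrite -!/(nc_vert _) !nc_vert_mulc mulgA center2_mulcc mul1g.
Qed.

Lemma card_ncA : #|ncA| = (#|A| - 2)%N.
Proof.
have ncVA : ncV G :&: A = A :\: 'Z(G).
  apply/setP => v; rewrite !in_setI !in_setD andbC.
  by case Av: (v \in A); rewrite ?andbF // (subsetP sAG) ?andbT.
rewrite /ncA /nc_vert card_enum_val_preim ncVA.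
by rewrite cardsD (setIidPr index2_center_sub) ZG cards2 eq_sym c_neq1.
Qed.

Lemma card_ncA_compl : #|~: ncA| = #|A|.
Proof.
have cardG : #|G| = (#|A| * 2)%N by rewrite -iAG Lagrange.
have cardV : #|ncV G| = (#|G| - 2)%N.
  by rewrite cardsD (setIidPr (center_sub G)) ZG cards2 eq_sym c_neq1.
have A_ge2 : (2 <= #|A|)%N.
  have := subset_leq_card index2_center_sub.
  by rewrite ZG cards2 eq_sym c_neq1.
have := cardsC ncA; rewrite [in X in _ = X]card_ord card_ncA; lia.
Qed.

Lemma nc_D_index2 (R : nzRingType) : nc_D G R = paired_D ncA nc_mulc R.
Proof.
apply/matrixP => i j; rewrite !mxE; congr (_%:R)%R.
rewrite nc_distE ?enum_valP // /paired_dist -!/(nc_vert _) (inj_eq enum_val_inj).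
case: eqVneq => [//|ij]; rewrite !inE.
have VGA (l : 'I_#|ncV G|) : nc_vert l \notin A -> nc_vert l \in G :\: A.
  by move=> lA; have /setDP[Gl _] := enum_valP l; rewrite inE lA.
have VAZ (l : 'I_#|ncV G|) : nc_vert l \in A -> nc_vert l \in A :\: 'Z(G).
  by move=> lA; have /setDP[_ lZ] := enum_valP l; rewrite inE lA andbT.
case: (boolP (nc_vert i \in A)) => iA; case: (boolP (nc_vert j \in A)) => jA /=.
- by rewrite (centsP cAA) ?eqxx.
- by rewrite (negbTE (index2_not_commute (VAZ _ iA) (VGA _ jA))).
- have /negbTE -> : j != nc_mulc i by apply: contraTneq jA => ->; rewrite nc_vert_mulc groupMl.
  by rewrite eq_sym (negbTE (index2_not_commute (VAZ _ jA) (VGA _ iA))).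
rewrite index2_commute_out ?VGA // ZG !inE -eq_mulgV1 (inj_eq enum_val_inj) eq_sym.
rewrite (negbTE ij) (canF_eq (mulgKV _)) -nc_vert_mulc (inj_eq enum_val_inj).
by case: (j == nc_mulc i).
Qed.

Local Open Scope ring_scope.

Lemma char_poly_nc_DQ_index2 (R : numDomainType) k :
  #|A| = (k + k)%N -> (1 < k)%N ->
  char_poly (nc_DQ G R) =
      ('X - (k%:R * 4 - 4)%:P) ^+ k
    * ('X - (k%:R * 4 - 2)%:P) ^+ k.-1
    * ('X - (k%:R * 6 - 8)%:P) ^+ (k + k - 3)
    * (('X - (k%:R * 10 - 12)%:P) * ('X - (k%:R * 6 - 2)%:P)
       - (k%:R * (k%:R - 1) * 4)%:P).
Proof.
move=> cardA k_gt1.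
have -> : nc_DQ G R = paired_DQ ncA nc_mulc R.
  by rewrite /nc_DQ /nc_transmission nc_D_index2.
have card_compl : #|~: ncA| = (k + k)%N by rewrite card_ncA_compl.
have cardS : #|ncA| = (k + k - 2)%N by rewrite card_ncA cardA.
rewrite (char_poly_paired_DQ pairing_nc_mulc card_compl) ?cardS; try lia.
rewrite natrB ?natrD; last lia.
have -> : (k + k - 2).-1 = (k + k - 3)%N by lia.
by congr (('X - _%:P) ^+ _ * ('X - _%:P) ^+ _ * ('X - _%:P) ^+ _
          * (('X - _%:P) * ('X - _%:P) - _%:P)); ring.
Qed.
End AbelianIndexTwo.

Section Semidihedral.
Local Open Scope group_scope.

Lemma semidihedral_cycle_index2 (gT : finGroupType) (G : {group gT}) n :
  (3 < n)%N -> G \isog 'SD_(2 ^ n) ->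
  exists x : gT, [/\ <[x]> \subset G, #|G : <[x]>| = 2%N, #[x] = (2 ^ n.-1)%N,
                     'Z(G) = [set 1; x ^+ (2 ^ n.-2)] & x ^+ (2 ^ n.-2) != 1].
Proof.
move=> n_gt3 isoG.
have [[x y] genG [oy _]] := generators_semidihedral n_gt3 isoG.
have [_ _ [ZG cardZ _ _] _ _] := semidihedral_structure n_gt3 genG isoG oy.
have [cardG Gx ox _] := genG.
have oc : #[x ^+ (2 ^ n.-2)] = 2%N by rewrite /order -ZG.
exists x; split => //; first by rewrite cycle_subG.
- rewrite -divgS ?cycle_subG // cardG -orderE ox.
  by case: n n_gt3 {isoG genG cardG ox ZG cardZ oc} => // n' _; rewrite expnS mulnK ?expn_gt0.
- by rewrite ZG cycle2g.
- by apply/eqP => c1; move: oc; rewrite c1 order1.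
Qed.
End Semidihedral.

Theorem theorem4p3 (R : realFieldType) (n : nat) (t1 t2 : R) :
  (4 <= n)%N ->
  (* t1, t2 are the two roots (with multiplicity) of
     (2^(n-1)-2) x^2 - (2^n-10) x - 2^(n-1) *)
  ((2 ^+ (n - 1) - 2) *: 'X^2 - (2 ^+ n - 10) *: 'X - (2 ^+ (n - 1))%:P
     = (2 ^+ (n - 1) - 2) *: (('X - t1%:P) * ('X - t2%:P)) :> {poly R}) ->
  char_poly (nc_DQ [set: gsort 'SD_(2 ^ n)]%G R) =
      ('X - (2 ^+ n - 4)%:P) ^+ (2 ^ (n - 2))%N
    * ('X - (2 ^+ n - 2)%:P) ^+ (2 ^ (n - 2) - 1)%N
    * ('X - (2 ^+ n + 2 ^+ (n - 1) - 8)%:P) ^+ (2 ^ (n - 1) - 3)%N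
    * ('X - (t1 * (2 ^+ (n - 1) - 2) + 3 * 2 ^+ (n - 1) - 2)%:P)
    * ('X - (t2 * (2 ^+ (n - 1) - 2) + 3 * 2 ^+ (n - 1) - 2)%:P).
Proof.
move=> n_ge4 roots.
have [x [sXG iXG ox ZG c_neq1]] := semidihedral_cycle_index2 n_ge4 (isog_refl _).
rewrite -subn1 in ox; rewrite -subn2 in ZG c_neq1.
set k := (2 ^ (n - 2))%N in ZG c_neq1 *.
have cardX : #|<[x]>%g| = (k + k)%N.
  by rewrite -orderE ox addnn -mul2n -expnS; congr (2 ^ _)%N; lia.
have k_gt1 : (1 < k)%N by rewrite -[1%N]/(2 ^ 0)%N ltn_exp2l //; lia.
have pow2n : (2 : R) ^+ n = k%:R * 4.
  have -> : 4 = (2 : R) ^+ 2 by rewrite expr2 -natrM.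
  by rewrite natrX -exprD; congr (_ ^+ _); lia.
have pow2n1 : (2 : R) ^+ (n - 1) = k%:R * 2.
  by rewrite natrX -exprSr; congr (_ ^+ _); lia.
rewrite (char_poly_nc_DQ_index2 sXG (cycle_abelian x) iXG ZG c_neq1 (mem_cycle _ _)
                                _ cardX k_gt1).
rewrite -[in RHS]mulrA -!addrA (affine_roots_quadratic _ roots) pow2n pow2n1.
have pow2n1_nat : (2 ^ (n - 1) = k + k)%N by rewrite -ox orderE cardX.
congr (('X - _%:P) ^+ _ * ('X - _%:P) ^+ _ * ('X - _%:P) ^+ _ * _).
- by rewrite subn1.
- by ring.
- by rewrite pow2n1_nat.
- by rewrite -mul_polyC; ring.
Qed.
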